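(* Let $n=5$. The largest integer $k\ge 0$ for which there exists a distinct DNF tautology in the variables $x_1,\dots,x_5$ all of whose cubes have length exactly $k$ is $k=2$. In particular, there is no distinct DNF tautology in $x_1,\dots,x_5$ all of whose cubes have length exactly $3$.
   Context: A literal is a variable $x_i$ or its negation $\bar x_i$. A cube is a conjunction of literals, at most one literal per variable; its length is the number of distinct literals in it, and its support is the set of indices of the variables occurring in it. A DNF is a disjunction of cubes; it is a tautology if it evaluates to true under every assignment of truth values to the variables $x_1,\dots,x_n$. A DNF is called distinct if no two of its cubes have the same support. *)

From mathcomp Require Import all_boot.
Set Implicit Arguments. Unset Strict Implicit. Unset Printing Implicit Defensive.

(* A cube is a partial map: c i = None  -> variable i does not occur;
   c i = Some true -> literal x_i;  c i = Some false -> literal (not x_i).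
   This encodes "at most one literal per variable". *)
Definition cube (n : nat) := {ffun 'I_n -> option bool}.

Definition support n (c : cube n) : {set 'I_n} := [set i | c i != None].

Definition cube_length n (c : cube n) : nat := #|support c|.

Definition assignment (n : nat) := {ffun 'I_n -> bool}.

Definition cube_sat n (a : assignment n) (c : cube n) : bool :=
  [forall i, if c i is Some b then a i == b else true].

Definition dnf (n : nat) := seq (cube n).

Definition dnf_sat n (a : assignment n) (F : dnf n) : bool :=
  has (cube_sat a) F.

Definition tautology n (F : dnf n) : Prop := forall a : assignment n, dnf_sat a F.

Definition distinct_dnf n (F : dnf n) : bool := uniq (map (@support n) F).

Definition all_length n (k : nat) (F : dnf n) : bool :=
  all (fun c => cube_length c == k) F.

Definition good_dnf n (k : nat) (F : dnf n) : Prop :=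
  [/\ distinct_dnf F, all_length k F & tautology F].

From Pilot Require Import Defs.
From mathcomp Require Import all_boot.
Set Implicit Arguments. Unset Strict Implicit. Unset Printing Implicit Defensive.

(* A distinct DNF whose cubes all have length k has at most one cube on each
   k-subset of the variables; adding an arbitrary cube on every unused
   support, a tautology yields a choice of one sign pattern per k-subset whose
   cubes cover {0,1}^5.  For k = 3, 4, 5 an exhaustive search rules such a
   choice out: take the first point not yet covered and branch on the first
   support whose chosen cube covers it, and on that cube.  No cube is longer
   than 5, and for k = 2 an explicit tautology with ten cubes exists. *)

Section Refutation.
Variables (T Pt : eqType) (sat : T -> Pt -> bool).

Definition covers (sel : seq T) (pts : seq Pt) : bool :=
  all (fun y => has (sat^~ y) sel) pts.

Definition selects (sel : seq T) (slots : seq (seq T)) : bool :=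
  all2 (fun c cs => c \in cs) sel slots.

Lemma selects_cat sel1 sel2 slots1 slots2 :
  selects sel1 slots1 -> selects sel2 slots2 ->
  selects (sel1 ++ sel2) (slots1 ++ slots2).
Proof. by elim: sel1 slots1 => [|c sel IH] [|cs slots] //= /andP[-> /IH]. Qed.

Lemma selects_avoiding y sel slots :
  selects sel slots -> ~~ has (sat^~ y) sel ->
  selects sel (map (filter (fun d => ~~ sat d y)) slots).
Proof.
elim: sel slots => [|c sel IH] [|cs slots] //= /andP[c_cs sel_slots].
by rewrite negb_or mem_filter c_cs => /andP[-> /(IH _ sel_slots)].
Qed.

(* Branch on the first slot whose chosen element covers [y], and on that
   element; the slots before it may then only choose elements avoiding [y].
   The test is an [if] rather than [==>] so that call-by-value evaluation
   skips the recursive call. *)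
Definition branch (rec : seq (seq T) -> seq Pt -> bool) (y : Pt) (pts : seq Pt) :=
  fix loop (pre post : seq (seq T)) {struct post} : bool :=
  if post is cs :: post' then
    all (fun c => if sat c y then
           rec (map (filter (fun d => ~~ sat d y)) pre ++ post')
               (filter (fun z => ~~ sat c z) pts) else true) cs
    && loop (rcons pre cs) post'
  else true.

Fixpoint refute (fuel : nat) (slots : seq (seq T)) (pts : seq Pt) : bool :=
  match pts, fuel with
  | y :: _, fuel'.+1 => branch (refute fuel') y pts [::] slots
  | _, _ => false
  end.

Section BranchSound.
Variable rec : seq (seq T) -> seq Pt -> bool.
Hypothesis rec_sound :
  forall slots pts sel, rec slots pts -> selects sel slots -> ~~ covers sel pts.

Lemma branch_sound y (pts : seq Pt) (post pre : seq (seq T)) (sel_pre sel_post : seq T) :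
  y \in pts -> branch rec y pts pre post ->
  selects sel_pre pre -> selects sel_post post -> ~~ has (sat^~ y) sel_pre ->
  ~~ covers (sel_pre ++ sel_post) pts.
Proof.
move=> pts_y; elim: post pre sel_pre sel_post => [|cs post IH] pre sel_pre [|c sel_post] //=.
  move=> _ _ _ /negP y_uncovered; apply/negP => /allP/(_ y pts_y).
  by rewrite cats0.
move=> /andP[branches loop] sel_pre_pre /andP[c_cs sel_post_post] sel_pre_y.
case c_y: (sat c y); last first.
  rewrite -cat_rcons; apply: IH loop _ sel_post_post _.
    by rewrite -!cats1 selects_cat //= c_cs.
  by rewrite -cats1 has_cat negb_or sel_pre_y /= c_y.
have := allP branches c c_cs; rewrite c_y /= => /rec_sound rec_ok.
have /rec_ok : selects (sel_pre ++ sel_post)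
    (map (filter (fun d => ~~ sat d y)) pre ++ post).
  by rewrite selects_cat ?selects_avoiding.
apply: contra => /allP covered; apply/allP => z; rewrite mem_filter.
by case/andP => c_z /covered; rewrite !has_cat /= (negbTE c_z).
Qed.

End BranchSound.

Lemma refute_sound fuel slots pts sel :
  refute fuel slots pts -> selects sel slots -> ~~ covers sel pts.
Proof.
elim: fuel slots pts sel => [|fuel IH] slots [|y pts] sel //= branches sel_slots.
exact: (branch_sound (sel_pre := [::]) IH (mem_head y pts) branches isT sel_slots isT).
Qed.

End Refutation.

Lemma uniq_map_inj_in (T T' : eqType) (f : T -> T') (s : seq T) :
  uniq (map f s) -> {in s &, injective f}.
Proof.
elim: s => [|x s IH] //= /andP[fx_notin uniq_fs] y z; rewrite !inE.
case/orP=> [/eqP->|s_y]; case/orP=> [/eqP->|s_z] // eq_f.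
- by move: fx_notin; rewrite eq_f map_f.
- by move: fx_notin; rewrite -eq_f map_f.
- exact: IH.
Qed.

Fixpoint bitseqs (n : nat) : seq bitseq :=
  if n is n'.+1 then [seq b :: m | b <- [:: false; true], m <- bitseqs n']
  else [:: [::]].

Lemma mem_bitseqs (m : bitseq) : m \in bitseqs (size m).
Proof.
elim: m => [|b m IH] //=.
by rewrite !mem_cat; case: b; rewrite (map_f _ IH) ?orbT.
Qed.

(* For computation, cubes are encoded as lists of literals (index, sign) and
   points as bit sequences: finite functions and sets do not reduce under
   [vm_compute]. *)
Definition lit_sat (l : seq (nat * bool)) (y : bitseq) : bool :=
  all (fun p => nth false y p.1 == p.2) l.

Definition cubes_on (S : seq nat) : seq (seq (nat * bool)) :=
  [seq zip S bs | bs <- bitseqs (size S)].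

Lemma mem_cubes_on_unzip1 (l : seq (nat * bool)) : l \in cubes_on (unzip1 l).
Proof.
rewrite -{1}(zip_unzip l) /cubes_on; apply: map_f.
by rewrite (_ : size _ = size (unzip2 l)) ?mem_bitseqs // !size_map.
Qed.

Definition supports (n k : nat) : seq (seq nat) :=
  [seq S <- [seq mask m (iota 0 n) | m <- bitseqs n] | size S == k].

Definition cube_families (n k : nat) := map cubes_on (supports n k).

Section Encoding.
Variable n : nat.
Implicit Types (c : cube n) (F : dnf n).

Definition lits c : seq (nat * bool) :=
  [seq (val i, odflt false (c i)) | i <- enum (Defs.support c)].

Lemma size_lits c : size (lits c) = cube_length c.
Proof. by rewrite size_map -cardE. Qed.

Lemma unzip1_lits c : unzip1 (lits c) = map val (enum (Defs.support c)).
Proof. by rewrite /unzip1 -map_comp. Qed.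

Lemma unzip1_lits_support c c' :
  unzip1 (lits c) = unzip1 (lits c') -> Defs.support c = Defs.support c'.
Proof.
rewrite !unzip1_lits => /(inj_map val_inj) eq_enum.
by apply/setP => i; rewrite -[LHS]mem_enum eq_enum mem_enum.
Qed.

Lemma unzip1_lits_supports c : unzip1 (lits c) \in supports n (cube_length c).
Proof.
rewrite mem_filter size_map size_lits eqxx /=.
have : subseq (unzip1 (lits c)) (iota 0 n).
  rewrite unzip1_lits -val_enum_ord; apply: map_subseq.
  by rewrite enumT /enum_mem filter_subseq.
case/subseqP => m size_m ->; apply: map_f.
by rewrite -[n](size_iota 0) -size_m mem_bitseqs.
Qed.

Lemma lit_sat_lits c (y : bitseq) :
  lit_sat (lits c) y = cube_sat [ffun i : 'I_n => nth false y i] c.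
Proof.
rewrite /lit_sat all_map; apply/allP/forallP => [sat_y i | sat_y i].
  rewrite ffunE; case c_i: (c i) => [b|] //.
  by have /= := sat_y i; rewrite mem_enum inE c_i => /(_ isT).
rewrite mem_enum inE /=; have := sat_y i; rewrite ffunE.
by case: (c i).
Qed.

Definition choose_lits F (S : seq nat) : seq (nat * bool) :=
  head (zip S (nseq (size S) false)) [seq lits c | c <- F & unzip1 (lits c) == S].

Lemma choose_lits_cubes_on F S : choose_lits F S \in cubes_on S.
Proof.
rewrite /choose_lits; case E: [seq lits c | c <- F & _] => [|l s] /=.
  by have := mem_cubes_on_unzip1 (zip S (nseq (size S) false)); rewrite unzip1_zip ?size_nseq.
have : l \in [seq lits c | c <- F & unzip1 (lits c) == S] by rewrite E mem_head.
by case/mapP => c; rewrite mem_filter => /andP[/eqP <- _] ->; apply: mem_cubes_on_unzip1.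
Qed.

Lemma choose_lits_cube F c :
  distinct_dnf F -> c \in F -> choose_lits F (unzip1 (lits c)) = lits c.
Proof.
move=> distinct_F F_c; rewrite /choose_lits.
case E: [seq lits c' | c' <- F & _] => [|l s] /=.
  have : lits c \in [seq lits c' | c' <- F & unzip1 (lits c') == unzip1 (lits c)].
    by rewrite map_f // mem_filter eqxx.
  by rewrite E.
have : l \in [seq lits c' | c' <- F & unzip1 (lits c') == unzip1 (lits c)].
  by rewrite E mem_head.
case/mapP => c'; rewrite mem_filter => /andP[/eqP /unzip1_lits_support eq_supp F_c'] ->.
by rewrite (uniq_map_inj_in distinct_F F_c' F_c eq_supp).
Qed.

Lemma selects_choose_lits F k :
  selects (map (choose_lits F) (supports n k)) (cube_families n k).
Proof.
rewrite /selects /cube_families; elim: (supports n k) => //= S Ss ->.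
by rewrite choose_lits_cubes_on.
Qed.

Lemma good_dnf_covers k F :
  good_dnf k F -> covers lit_sat (map (choose_lits F) (supports n k)) (bitseqs n).
Proof.
case=> distinct_F length_F taut_F; apply/allP => y _.
have /hasP[c F_c c_y] := taut_F [ffun i : 'I_n => nth false y i].
apply/hasP; exists (lits c); last by rewrite lit_sat_lits.
rewrite -(choose_lits_cube distinct_F F_c); apply: map_f.
by rewrite -(eqP (allP length_F c F_c)) unzip1_lits_supports.
Qed.

Lemma good_dnf_not_refuted fuel k F :
  good_dnf k F -> ~~ refute lit_sat fuel (cube_families n k) (bitseqs n).
Proof.
move/good_dnf_covers; apply: contraL => /refute_sound; apply.
exact: selects_choose_lits.
Qed.

Lemma good_dnf_le k F : good_dnf k F -> k <= n.
Proof.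
case=> _ length_F taut_F; have /hasP[c F_c _] := taut_F [ffun => false].
by rewrite -(eqP (allP length_F c F_c)) -{2}(card_ord n) max_card.
Qed.

End Encoding.

(* Each branching consumes one slot, so [size + 1] steps of fuel suffice. *)
Lemma refute_cube_families5 k : 2 < k <= 5 ->
  refute lit_sat (size (cube_families 5 k)).+1 (cube_families 5 k) (bitseqs 5).
Proof.
case/andP=> k_gt2 k_le5; have : k \in [:: 3; 4; 5].
  by rewrite !inE; move: k_gt2 k_le5; case: k => [|[|[|[|[|[|k]]]]]].
by rewrite !inE => /or3P[] /eqP->; vm_compute.
Qed.

Section PairCube.
Variable n : nat.

Definition pair_cube (i j : nat) (bi bj : bool) : cube n :=
  [ffun k => if val k == i then Some bi else if val k == j then Some bj else None].

Definition set_bits (A : {set 'I_n}) : bitseq := [seq k \in A | k <- enum 'I_n].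

Lemma mem_support_pair_cube i j bi bj k :
  (k \in Defs.support (pair_cube i j bi bj)) = (val k == i) || (val k == j).
Proof. by rewrite inE ffunE; case: (val k == i); case: (val k == j). Qed.

Lemma set_bits_support_pair_cube i j bi bj :
  set_bits (Defs.support (pair_cube i j bi bj)) = [seq (m == i) || (m == j) | m <- iota 0 n].
Proof.
rewrite /set_bits -val_enum_ord -[RHS]map_comp.
by apply: eq_map => k /=; rewrite mem_support_pair_cube.
Qed.

Variables (i j : nat) (bi bj : bool).
Hypotheses (lt_i : i < n) (lt_j : j < n) (neq_ij : i != j).

Lemma cube_length_pair_cube : cube_length (pair_cube i j bi bj) = 2.
Proof.
rewrite /cube_length.
have -> : Defs.support (pair_cube i j bi bj) = [set Ordinal lt_i; Ordinal lt_j].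
  by apply/setP => k; rewrite mem_support_pair_cube !inE.
by rewrite cards2 -(inj_eq val_inj) /= neq_ij.
Qed.

Lemma cube_sat_pair_cube (a : assignment n) :
  cube_sat a (pair_cube i j bi bj) =
  (nth false (fgraph a) i == bi) && (nth false (fgraph a) j == bj).
Proof.
rewrite (nth_fgraph_ord false (Ordinal lt_i)) (nth_fgraph_ord false (Ordinal lt_j)).
apply/forallP/andP => [sat_a | [a_i a_j] k]; last first.
  rewrite ffunE; case: eqP => [k_i|_].
    by rewrite (_ : k = Ordinal lt_i) //; apply: val_inj.
  by case: eqP => [k_j|_] //; rewrite (_ : k = Ordinal lt_j) //; apply: val_inj.
split; first by have := sat_a (Ordinal lt_i); rewrite ffunE eqxx.
by have := sat_a (Ordinal lt_j); rewrite ffunE /= eq_sym (negbTE neq_ij) eqxx.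
Qed.

End PairCube.
Arguments pair_cube {n} i j bi bj.

Definition pair_tautology : dnf 5 :=
  [:: pair_cube 0 1 false false; pair_cube 0 2 false false; pair_cube 0 3 false false;
      pair_cube 0 4 false false; pair_cube 1 2 false false; pair_cube 1 3 false false;
      pair_cube 1 4 true false; pair_cube 2 3 true true; pair_cube 2 4 false true;
      pair_cube 3 4 false true].

Lemma good_dnf_pair_tautology : good_dnf 2 pair_tautology.
Proof.
split.
- apply: (@map_uniq _ _ (@set_bits 5)); rewrite -map_comp /=.
  by rewrite !set_bits_support_pair_cube.
- by rewrite /all_length /= !cube_length_pair_cube.
move=> a; rewrite /dnf_sat /= !cube_sat_pair_cube //.
have : size (fgraph a) = 5 by rewrite size_tuple card_ord.
case: (tval (fgraph a)) => [|y0 [|y1 [|y2 [|y3 [|y4 [|]]]]]] //= _.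
by case: y0; case: y1; case: y2; case: y3; case: y4.
Qed.

Theorem mainTheorem1 :
  (exists F : dnf 5, good_dnf 2 F) /\
  (forall (k : nat) (F : dnf 5), good_dnf k F -> k <= 2).
Proof.
split; first by exists pair_tautology; exact: good_dnf_pair_tautology.
move=> k F good_F; rewrite leqNgt; apply/negP => k_gt2.
have := good_dnf_not_refuted (size (cube_families 5 k)).+1 good_F.
by rewrite refute_cube_families5 // k_gt2 (good_dnf_le good_F).
Qed.
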